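(* Let $n\ge 3$ and let $C\in\mathbb{R}^{n\times n}$ be nonnegative, doubly stochastic, irreducible, with zero diagonal entries. Let $x(s)$ evolve by the Modified DeGroot-Friedkin model $x(s+1)=C^\top x(s)+X(s)x(s)-C^\top X(s)x(s)$, $X(s)=\mathrm{diag}(x(s))$, with $x(0)\in\Delta$. Let $x(s)_{\max}=\max_i x_i(s)$. If for some $s$ we have $x(s)>0$ (all entries positive) and $x(s)\ne\tfrac1n\mathbf 1$, then $x(s+n-1)_{\max}<x(s)_{\max}$.
   Context: $\Delta=\{x\in\mathbb{R}^n: x\ge 0,\ \sum_i x_i=1\}$; $\mathbf 1$ is the all-ones vector. *)

From HB Require Import structures.
From mathcomp Require Import all_boot all_order all_algebra.
Set Implicit Arguments. Unset Strict Implicit. Unset Printing Implicit Defensive.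
Import Order.TTheory GRing.Theory Num.Theory.
Local Open Scope ring_scope.

Section Defs.
Variable R : realFieldType.

Definition nonneg_mx {m} (C : 'M[R]_m) : Prop := forall i j, 0 <= C i j.

Definition doubly_stochastic {m} (C : 'M[R]_m) : Prop :=
  nonneg_mx C /\ (forall i, \sum_j C i j = 1) /\ (forall j, \sum_i C i j = 1).

Definition irreducible_mx {m} (C : 'M[R]_m) : Prop :=
  forall i j : 'I_m, connect (fun a b => 0 < C a b) i j.

Definition zero_diag {m} (C : 'M[R]_m) : Prop := forall i, C i i = 0.

Definition in_simplex {m} (x : 'cV[R]_m) : Prop :=
  (forall i, 0 <= x i 0) /\ \sum_i x i 0 = 1.

Definition diagc {m} (x : 'cV[R]_m) : 'M[R]_m := diag_mx x^T.

Definition mdf_step {m} (C : 'M[R]_m) (x : 'cV[R]_m) : 'cV[R]_m :=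
  C^T *m x + diagc x *m x - C^T *m (diagc x *m x).

Definition vmax {m} (x : 'cV[R]_m.+1) : R :=
  \big[Num.max/x ord0 0]_(i < m.+1) x i 0.

End Defs.

From HB Require Import structures.
From mathcomp Require Import all_boot all_order all_algebra.
From mathcomp Require Import lra zify.
Set Implicit Arguments. Unset Strict Implicit. Unset Printing Implicit Defensive.
Import Order.TTheory GRing.Theory Num.Theory.
Local Open Scope ring_scope.

(* Entrywise, x'_i = x_i^2 + sum_j C_ji g(x_j) with g(t) = t - t^2 the
   logistic map.  On a
   positive point of the simplex with at least three entries, any two entries
   sum to less than 1, and g is increasing below 1/2 in the sense that
   g(a) <= g(b) when a <= b and a + b < 1; hence g(x_j) <= g(M) for the maximal
   entry M, and since the columns of C sum to 1, x'_i <= M^2 + g(M) = M.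
   Equality forces x_i = M and x_j = M for every in-neighbour j of i, so as
   long as the maximum does not drop, the set of maximising indices strictly
   shrinks: otherwise it would be closed under in-neighbours, hence everything
   by irreducibility, and x would be uniform.  A non-uniform point has at most
   n - 1 maximising indices, so within n - 1 steps the maximum must drop. *)

Section MaxEntry.
Variables (R : realFieldType) (m : nat).
Implicit Types (y : 'cV[R]_m.+1) (c : R).

Lemma le_vmax y i : y i 0 <= vmax y.
Proof. by rewrite /vmax (bigD1 i) //= le_max lexx. Qed.

Lemma vmax_le y c : (forall i, y i 0 <= c) -> vmax y <= c.
Proof.
move=> yc; apply: (big_ind (fun v => v <= c)) => // a b ac bc.
by rewrite ge_max ac bc.
Qed.

Lemma vmax_attained y : exists i, vmax y = y i 0.
Proof.
apply: (big_ind (fun v => exists i, v = y i 0)); first by exists ord0.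
  move=> _ _ [i ->] [j ->]; case: (leP (y i 0) (y j 0)) => _.
    by exists j.
  by exists i.
by move=> i _; exists i.
Qed.

Definition argmax_set y : {set 'I_m.+1} := [set i | y i 0 == vmax y].

Lemma argmax_set_neq0 y : argmax_set y != set0.
Proof.
by have [i yi] := vmax_attained y; apply/set0Pn; exists i; rewrite inE yi.
Qed.

Lemma argmax_setT_uniform y :
  in_simplex y -> argmax_set y = setT -> y = const_mx (m.+1%:R)^-1.
Proof.
move=> [_ sum1] allmax; have yM i : y i 0 = vmax y.
  by have := in_setT i; rewrite -allmax inE => /eqP.
have nM : vmax y * m.+1%:R = 1.
  rewrite -[RHS]sum1 (eq_bigr (fun=> vmax y)) => [|i _]; last exact: yM.
  by rewrite sumr_const card_ord mulr_natr.
apply/matrixP => i j; rewrite ord1 mxE yM.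
have n_neq0 : m.+1%:R != 0 :> R by rewrite pnatr_eq0.
by apply: (mulIf n_neq0); rewrite nM mulVf.
Qed.

End MaxEntry.

Section Simplex.
Variables (R : realFieldType) (m : nat).
Implicit Types (C : 'M[R]_m.+1) (y : 'cV[R]_m.+1).

Lemma in_simplex_le1 y i : in_simplex y -> y i 0 <= 1.
Proof.
case=> y_ge0 <-; rewrite (bigD1 i) //= lerDl.
by apply: sumr_ge0 => j _; apply: y_ge0.
Qed.

Lemma in_simplex_logistic_ge0 y i :
  in_simplex y -> 0 <= y i 0 - y i 0 * y i 0.
Proof. by move=> ys; have := in_simplex_le1 i ys; have := ys.1 i; nra. Qed.

Lemma pos_simplex_addr_lt1 y j k : (2 < m.+1)%N -> in_simplex y ->
  (forall i, 0 < y i 0) -> j != k -> y j 0 + y k 0 < 1.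
Proof.
move=> n_gt2 [_ sum1] y_gt0 jk.
have /card_gt0P [l] : (0 < #|~: [set j; k]|)%N.
  by have := cardsC [set j; k]; rewrite cards2 jk card_ord; lia.
rewrite !inE negb_or => /andP [lj lk].
rewrite -sum1 (bigD1 j) //= (bigD1 k) /=; last by rewrite eq_sym jk.
rewrite (bigD1 l) /=; last by rewrite lj lk.
rewrite addrA ltrDl ltr_pwDl //; apply: sumr_ge0 => i _.
exact: ltW.
Qed.

Lemma mdf_step_entry C y i :
  mdf_step C y i 0 = y i 0 * y i 0 + \sum_j C j i * (y j 0 - y j 0 * y j 0).
Proof.
rewrite /mdf_step /diagc mul_diag_mx !mxE.
have -> : \sum_j C^T i j * (\matrix_(k, l) (y^T 0 k * y k l)) j 0
          = \sum_j C j i * (y j 0 * y j 0).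
  by apply: eq_bigr => j _; rewrite !mxE.
have -> : \sum_j C^T i j * y j 0 = \sum_j C j i * y j 0.
  by apply: eq_bigr => j _; rewrite mxE.
under [X in _ = _ + X]eq_bigr do rewrite mulrBr.
by rewrite sumrB; lra.
Qed.

Lemma mdf_step_entry_deficit C y i c : (\sum_j C j i = 1) ->
  mdf_step C y i 0
  = y i 0 * y i 0 + c - \sum_j C j i * (c - (y j 0 - y j 0 * y j 0)).
Proof.
move=> col1; rewrite mdf_step_entry.
under [X in _ = _ - X]eq_bigr do rewrite mulrBr.
by rewrite sumrB -mulr_suml col1 mul1r; lra.
Qed.

Lemma in_simplex_mdf_step C y : doubly_stochastic C -> in_simplex y ->
  in_simplex (mdf_step C y).
Proof.
move=> [C_ge0 [row1 _]] ys; split=> [i|].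
  have yi_ge0 := ys.1 i.
  rewrite mdf_step_entry addr_ge0 ?mulr_ge0 // sumr_ge0 // => j _.
  by rewrite mulr_ge0 ?in_simplex_logistic_ge0.
under eq_bigr do rewrite mdf_step_entry.
rewrite big_split /= exchange_big /=.
under [X in _ + X = _]eq_bigr do rewrite -mulr_suml row1 mul1r.
by rewrite sumrB addrC subrK ys.2.
Qed.

Lemma mdf_step_gt0 C y : doubly_stochastic C -> in_simplex y ->
  (forall i, 0 < y i 0) -> forall i, 0 < mdf_step C y i 0.
Proof.
move=> [C_ge0 _] ys y_gt0 i; rewrite mdf_step_entry ltr_wpDr ?mulr_gt0 //.
by apply: sumr_ge0 => j _; rewrite mulr_ge0 ?in_simplex_logistic_ge0.
Qed.

End Simplex.

Lemma logistic_leif (R : realFieldType) (a b : R) : a <= b -> a + b < 1 ->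
  a - a * a <= b - b * b ?= iff (a == b).
Proof.
move=> ab ab1; have gap : b - b * b - (a - a * a) = (b - a) * (1 - a - b).
  by rewrite !mulrBr !mulrBl !mulr1; lra.
split; first by rewrite -subr_ge0 gap mulr_ge0 // subr_ge0 //; lra.
apply/eqP/eqP => [e|->] //.
have /eqP : (b - a) * (1 - a - b) = 0 by rewrite -gap e subrr.
by rewrite mulf_eq0 => /orP [|] /eqP; lra.
Qed.

Lemma irreducible_in_closed (R : realFieldType) m (C : 'M[R]_m)
    (S : {set 'I_m}) :
  irreducible_mx C -> S != set0 ->
  (forall i j, i \in S -> 0 < C j i -> j \in S) -> S = setT.
Proof.
move=> C_irr /set0Pn [i iS] closed; apply/setP => j; rewrite inE.
have /connectP [p jp i_last] := C_irr j i; rewrite {i}i_last in iS.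
elim: p j jp iS => [|k p IHp] j //= /andP [jk kp] /(IHp k kp) kS.
exact: closed kS jk.
Qed.

Section MaxBound.
Variables (R : realFieldType) (m : nat) (C : 'M[R]_m.+1) (y : 'cV[R]_m.+1).
Hypotheses (n_gt2 : (2 < m.+1)%N) (C_ds : doubly_stochastic C)
  (C_irr : irreducible_mx C).
Hypotheses (ys : in_simplex y) (y_gt0 : forall i, 0 < y i 0).

Lemma logistic_le_vmax j :
  y j 0 - y j 0 * y j 0 <= vmax y - vmax y * vmax y ?= iff (y j 0 == vmax y).
Proof.
have [k yk] := vmax_attained y.
have [-> | jk] := eqVneq j k; first by rewrite yk; apply/leif_refl.
rewrite yk; apply: logistic_leif; first by rewrite -yk le_vmax.
exact: pos_simplex_addr_lt1.
Qed.

Let G := vmax y - vmax y * vmax y.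
Let deficit i j := C j i * (G - (y j 0 - y j 0 * y j 0)).

Let deficit_ge0 i j : 0 <= deficit i j.
Proof.
apply: mulr_ge0; first exact: C_ds.1.
by rewrite subr_ge0 (logistic_le_vmax j).1.
Qed.

Let mdf_step_deficit i :
  mdf_step C y i 0 = y i 0 * y i 0 + G - \sum_j deficit i j.
Proof. exact/mdf_step_entry_deficit/C_ds.2.2. Qed.

Let sqr_le_vmax i : y i 0 * y i 0 <= vmax y * vmax y.
Proof. by have := le_vmax y i; have := y_gt0 i; nra. Qed.

Lemma mdf_step_le_vmax i : mdf_step C y i 0 <= vmax y.
Proof.
rewrite mdf_step_deficit /G; have := sqr_le_vmax i.
have : 0 <= \sum_j deficit i j by apply: sumr_ge0 => j _.
lra.
Qed.

Lemma mdf_step_eq_vmax i : mdf_step C y i 0 = vmax y ->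
  y i 0 = vmax y /\ forall j, 0 < C j i -> y j 0 = vmax y.
Proof.
rewrite mdf_step_deficit /G => e.
have D_ge0 : 0 <= \sum_j deficit i j by apply: sumr_ge0 => j _.
have := sqr_le_vmax i; have := y_gt0 i; have := le_vmax y i.
split; first by nra.
move=> j Cji; have D0 : \sum_j deficit i j = 0 by nra.
have /eqP := @psumr_eq0P _ _ _ _ (fun j _ => deficit_ge0 i j) D0 j isT.
rewrite mulf_eq0 gt_eqF //= subr_eq0 eq_sym => gj.
by have [_] := logistic_le_vmax j; rewrite gj => /esym/eqP.
Qed.

Lemma argmax_mdf_step_proper : vmax (mdf_step C y) = vmax y ->
  argmax_set y != setT -> argmax_set (mdf_step C y) \proper argmax_set y.
Proof.
move=> same notT.
have sub i : i \in argmax_set (mdf_step C y) ->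
    i \in argmax_set y /\ forall j, 0 < C j i -> j \in argmax_set y.
  rewrite !inE same => /eqP/mdf_step_eq_vmax [-> inN]; split=> // j Cji.
  by rewrite inE inN.
rewrite properEneq; apply/andP; split; last by apply/subsetP => i /sub [].
apply: contra notT => /eqP eqS; rewrite -eqS; apply/eqP.
apply: irreducible_in_closed C_irr (argmax_set_neq0 _) _ => i j /sub [_ inN].
by move/inN; rewrite eqS.
Qed.

End MaxBound.

Section Iteration.
Variables (R : realFieldType) (m : nat) (C : 'M[R]_m.+1).
Hypotheses (n_gt2 : (2 < m.+1)%N) (C_ds : doubly_stochastic C)
  (C_irr : irreducible_mx C).
Implicit Types (y : 'cV[R]_m.+1).

Lemma iter_mdf_simplex y k :
  in_simplex y -> in_simplex (iter k (mdf_step C) y).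
Proof. by move=> ys; elim: k => //= k; apply: in_simplex_mdf_step. Qed.

Lemma iter_mdf_gt0 y k : in_simplex y -> (forall i, 0 < y i 0) ->
  forall i, 0 < iter k (mdf_step C) y i 0.
Proof.
move=> ys y_gt0; elim: k => //= k IHk.
exact: mdf_step_gt0 (iter_mdf_simplex k ys) IHk.
Qed.

(* While the maximum is unchanged, the number of maximising indices plus the
   number of elapsed steps stays at most n - 1. *)
Lemma vmax_iter_mdf_lt y : in_simplex y -> (forall i, 0 < y i 0) ->
  y != const_mx (m.+1%:R)^-1 -> vmax (iter m (mdf_step C) y) < vmax y.
Proof.
move=> ys y_gt0 y_nonunif; pose z k := iter k (mdf_step C) y.
have shrink k : vmax (z k) < vmax y \/
    vmax (z k) = vmax y /\ (#|argmax_set (z k)| + k <= m)%N.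
  elim: k => [|k IHk].
    right; split=> //; rewrite addn0.
    have : argmax_set y != setT.
      by apply: contra y_nonunif => /eqP/(argmax_setT_uniform ys) ->.
    by rewrite -properT => /proper_card; rewrite cardsT card_ord.
  have zs := iter_mdf_simplex k ys; have z_gt0 := iter_mdf_gt0 k ys y_gt0.
  have dec : vmax (z k.+1) <= vmax (z k).
    by apply: vmax_le => i; apply: mdf_step_le_vmax.
  case: IHk => [lt | [eqM card_le]]; first by left; apply: le_lt_trans dec lt.
  have [lt | ge] := ltP (vmax (z k.+1)) (vmax y); first by left.
  have same : vmax (z k.+1) = vmax (z k) by apply/le_anti; rewrite dec eqM ge.
  right; split; first by rewrite same.
  have notT : argmax_set (z k) != setT.
    by apply: contraTneq card_le => ->; rewrite cardsT card_ord; lia.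
  have shrunk : (#|argmax_set (z k.+1)| < #|argmax_set (z k)|)%N.
    apply: proper_card.
    exact: argmax_mdf_step_proper n_gt2 C_ds C_irr zs z_gt0 same notT.
  lia.
have [// | [_ card_le]] := shrink m.
by move: card_le; have := argmax_set_neq0 (z m); rewrite -card_gt0; lia.
Qed.

End Iteration.

Theorem lemma5 (R : realFieldType) (m : nat) (hn : (3 <= m.+1)%N)
  (C : 'M[R]_m.+1)
  (hC : doubly_stochastic C) (hirr : irreducible_mx C) (hdiag : zero_diag C)
  (x : nat -> 'cV[R]_m.+1)
  (hx0 : in_simplex (x 0%N))
  (hstep : forall s, x s.+1 = mdf_step C (x s))
  (s : nat)
  (hpos : forall i, 0 < x s i 0)
  (hne : x s != const_mx (m.+1%:R)^-1) :
  vmax (x (s + m)%N) < vmax (x s).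
Proof.
have x_iter k : x (s + k)%N = iter k (mdf_step C) (x s).
  by elim: k => [|k IHk]; rewrite ?addn0 // addnS hstep IHk.
have x_simplex t : in_simplex (x t).
  by elim: t => // t IHt; rewrite hstep; apply: in_simplex_mdf_step.
by rewrite x_iter; apply: vmax_iter_mdf_lt.
Qed.
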